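(* Every $3$-dimensional Acaa-algebra over a field $\mathbb K$ of characteristic $0$ is isomorphic to one of the following: (1) the $3$-dimensional abelian algebra (all brackets zero); (2) the $3$-dimensional Heisenberg algebra $\mathfrak h_3$, given in a basis $\{e_1,e_2,e_3\}$ by $[e_1,e_2]=e_3$ and all other brackets of basis vectors (not determined by anticommutativity) zero.
   Context: An Acaa-algebra over a field $\mathbb K$ of characteristic $0$ is a $\mathbb K$-vector space $A$ with a bilinear product $[\cdot,\cdot]$ which is anticommutative, $[x,y]=-[y,x]$, and satisfies $[x_1,[x_2,x_3]]=[x_2,[x_3,x_1]]$ for all $x_1,x_2,x_3\in A$. Isomorphism means a linear bijection preserving the bracket. *)

From HB Require Import structures.
From mathcomp Require Import all_boot all_order all_algebra.
Set Implicit Arguments. Unset Strict Implicit. Unset Printing Implicit Defensive.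
Import GRing.Theory.
Local Open Scope ring_scope.

Definition bilinear_bracket (K : fieldType) (V : lmodType K) (br : V -> V -> V) :=
  (forall a x y z, br (a *: x + y) z = a *: br x z + br y z) /\
  (forall a x y z, br x (a *: y + z) = a *: br x y + br x z).

Definition acaa (K : fieldType) (V : lmodType K) (br : V -> V -> V) :=
  bilinear_bracket br /\
  (forall x y, br x y = - br y x) /\
  (forall x1 x2 x3, br x1 (br x2 x3) = br x2 (br x3 x1)).

Definition alg_iso (K : fieldType) (V W : lmodType K)
  (brV : V -> V -> V) (brW : W -> W -> W) :=
  exists f : V -> W,
    [/\ (forall a x y, f (a *: x + y) = a *: f x + f y),
        bijective f &
        forall x y, f (brV x y) = brW (f x) (f y)].

(* The model algebras on K^3 = 'rV[K]_3 with standard basis e_1, e_2, e_3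
   (indices 0, 1, 2). *)
Definition abelian3_br (K : fieldType) (x y : 'rV[K]_3) : 'rV[K]_3 := 0.

(* Heisenberg algebra h_3: [e1,e2] = e3, other basis brackets zero;
   bilinear extension: [x,y] = (x1 y2 - x2 y1) e3. *)
Definition heis3_br (K : fieldType) (x y : 'rV[K]_3) : 'rV[K]_3 :=
  (x 0 ord0 * y 0 (inord 1) - x 0 (inord 1) * y 0 ord0) *: delta_mx 0 (inord 2).

From HB Require Import structures.
From mathcomp Require Import all_boot all_order all_algebra.
From Stdlib Require Import Classical.
(** In characteristic not 2 the Acaa axioms make [[x,[y,z]]] alternating in
    [x, y, z] and force [[[a,b],[c,d]] = 0]; hence [w = [x,[y,z]]] is central,
    and bracketing [v = a x + b y + c z] with [[y,z]], [[z,x]], [[x,y]] gives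
    [a w], [b w], [c w].  If [w <> 0] this makes [x, y, z] independent, hence
    a basis in dimension 3, and then the central [w] has all coordinates [0].
    So [[x,[y,z]] = 0] identically: either the bracket vanishes, or any [p, q]
    with [[p,q] <> 0] give a basis [p, q, [p,q]] with the Heisenberg brackets. *)

Set Implicit Arguments.
Unset Strict Implicit.
Unset Printing Implicit Defensive.

Import GRing.Theory.
Local Open Scope ring_scope.

Section AcaaAlgebra.
Variables (K : fieldType) (V : lmodType K) (br : V -> V -> V).
Hypothesis brA : acaa br.

Let br_linearl z : linear (br^~ z).
Proof. by move=> a x y; case: brA => [[brl _] _]; apply: brl. Qed.
Let br_linearr x : linear (br x).
Proof. by move=> a y z; case: brA => [[_ brr] _]; apply: brr. Qed.

Let brl z : {linear V -> V} := HB.pack (br^~ z)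
  (GRing.isSemilinear.Build K V V _ (br^~ z)
     (GRing.semilinear_linear (br_linearl z))).
Let brr x : {linear V -> V} := HB.pack (br x)
  (GRing.isSemilinear.Build K V V _ (br x)
     (GRing.semilinear_linear (br_linearr x))).

Lemma br0l z : br 0 z = 0.
Proof. exact: (linear0 (brl z)). Qed.
Lemma br0r x : br x 0 = 0.
Proof. exact: (linear0 (brr x)). Qed.
Lemma brDl x y z : br (x + y) z = br x z + br y z.
Proof. exact: (raddfD (brl z) x y). Qed.
Lemma brDr x y z : br x (y + z) = br x y + br x z.
Proof. exact: (raddfD (brr x) y z). Qed.
Lemma brZl a x z : br (a *: x) z = a *: br x z.
Proof. exact: (linearZZ (brl z) a x). Qed.
Lemma brZr a x y : br x (a *: y) = a *: br x y.
Proof. exact: (linearZZ (brr x) a y). Qed.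
Lemma brNl x z : br (- x) z = - br x z.
Proof. exact: (raddfN (brl z) x). Qed.
Lemma brNr x y : br x (- y) = - br x y.
Proof. exact: (raddfN (brr x) y). Qed.

Lemma brC x y : br x y = - br y x.
Proof. by case: brA => [_ []]. Qed.
Lemma br_cycle x y z : br x (br y z) = br y (br z x).
Proof. by case: brA => [_ []]. Qed.

Hypothesis two_neq0 : 2%:R != 0 :> K.

Lemma fixed_opp_eq0 (v : V) : v = - v -> v = 0.
Proof.
move=> vN; have : 2%:R *: v = 0 by rewrite scaler_nat mulr2n {1}vN addNr.
by move/eqP; rewrite scaler_eq0 (negbTE two_neq0) => /eqP.
Qed.

Lemma brxx x : br x x = 0.
Proof. by apply: fixed_opp_eq0; rewrite {1}brC. Qed.

Lemma brx_brxy0 x y : br x (br x y) = 0.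
Proof. by apply: fixed_opp_eq0; rewrite {1}br_cycle (brC y) brNr. Qed.

Lemma bry_brxy0 x y : br y (br x y) = 0.
Proof. by rewrite br_cycle brxx br0r. Qed.

Lemma br_brbr0 a b c d : br (br a b) (br c d) = 0.
Proof.
pose Q x y z t := br (br x y) (br z t).
have Q_shift x y z t : Q x y z t = Q y t z x.
  by rewrite /Q br_cycle (br_cycle t) (br_cycle z) (br_cycle x).
have QNl x y z t : Q x y z t = - Q y x z t by rewrite /Q (brC x) brNl.
have QNr x y z t : Q x y z t = - Q x y t z by rewrite /Q (brC z) brNr.
have QNs x y z t : Q x y z t = - Q z t x y by rewrite /Q brC.
apply: fixed_opp_eq0; rewrite -/(Q a b c d).
by rewrite {1}QNs Q_shift QNl opprK QNs Q_shift QNr opprK QNs.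
Qed.

Lemma br_nested_l0 x y z u : br (br x (br y z)) u = 0.
Proof. by rewrite brC br_cycle br_cycle br_brbr0 oppr0. Qed.

Lemma br_comb3_brs x y z a b c (v := a *: x + b *: y + c *: z)
    (w := br x (br y z)) :
  [/\ br v (br y z) = a *: w, br v (br z x) = b *: w & br v (br x y) = c *: w].
Proof.
rewrite /v !brDl !brZl !brx_brxy0 !bry_brxy0 !scaler0 ?addr0 ?add0r.
by rewrite /w (br_cycle x y z) (br_cycle y z x).
Qed.

End AcaaAlgebra.

Lemma scaler_eq0_coef (K : fieldType) (V : lmodType K) (v : V) a :
  v != 0 -> a *: v = 0 -> a = 0.
Proof. by move/negbTE=> v_neq0 /eqP; rewrite scaler_eq0 v_neq0 orbF => /eqP. Qed.

Lemma sum_tuple3 (K : fieldType) (V : lmodType K) (x y z : V) (k : 'I_3 -> K) :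
  \sum_i k i *: [tuple x; y; z]`_i =
    k ord0 *: x + k (inord 1) *: y + k (inord 2) *: z.
Proof.
rewrite !big_ord_recl big_ord0 addr0 addrA /=.
by congr (_ + k _ *: _ + k _ *: _); apply: val_inj; rewrite /= inordK.
Qed.

Lemma ord3P (i : 'I_3) : [\/ i = ord0, i = inord 1 | i = inord 2].
Proof.
by case: i => -[|[|[|//]]] lti; [apply: Or31 | apply: Or32 | apply: Or33];
  apply: val_inj; rewrite /= ?inordK.
Qed.

Definition lincomb (K : fieldType) (V : lmodType K) n (X : n.-tuple V)
    (r : 'rV[K]_n) : V :=
  \sum_i r 0 i *: X`_i.

Lemma lincomb_scale_delta (K : fieldType) (V : lmodType K) n (X : n.-tuple V) a i :
  lincomb X (a *: delta_mx 0 i) = a *: X`_i.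
Proof.
rewrite /lincomb (bigD1 i) //= !mxE !eqxx mulr1 big1 ?addr0 // => j /negbTE ji.
by rewrite !mxE ji andbF mulr0 scale0r.
Qed.

Section Coordinates.
Variables (K : fieldType) (V : vectType K).

Lemma alg_iso_basis n (X : n.-tuple V) (br : V -> V -> V)
    (B : 'rV[K]_n -> 'rV[K]_n -> 'rV[K]_n) :
  basis_of fullv X -> {morph lincomb X : r s / B r s >-> br r s} -> alg_iso br B.
Proof.
move=> Xbasis lincombB; pose coords v := \row_i coord X i v.
have coordsK : cancel coords (lincomb X).
  move=> v; rewrite [RHS](coord_basis Xbasis (memvf v)).
  by apply: eq_bigr => i _; rewrite mxE.
have combK : cancel (lincomb X) coords.
  by move=> r; apply/rowP => i; rewrite mxE coord_sum_free ?(basis_free Xbasis).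
exists coords; split.
- by move=> a x y; apply/rowP => i; rewrite !mxE linearP.
- by exists (lincomb X).
- by move=> x y; rewrite -{1}(coordsK x) -{1}(coordsK y) -lincombB combK.
Qed.

Lemma basis_of_tuple3 (x y z : V) : \dim {:V} = 3 ->
    (forall a b c, a *: x + b *: y + c *: z = 0 -> [/\ a = 0, b = 0 & c = 0]) ->
  basis_of fullv [tuple x; y; z].
Proof.
move=> dimV indep; rewrite basisEfree subvf dimV andbT.
apply/freeP => k; rewrite sum_tuple3 => /indep [k0 k1 k2] i.
by case: (ord3P i) => ->.
Qed.

End Coordinates.

Lemma alg_iso_abelian3 (K : fieldType) (V : vectType K) (br : V -> V -> V) :
  \dim {:V} = 3 -> (forall x y, br x y = 0) -> alg_iso br (@abelian3_br K).
Proof.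
move=> dimV br0; have Xbasis := vbasisP {:V}.
rewrite -(val_tcast dimV (vbasis _)) in Xbasis.
apply: (alg_iso_basis Xbasis) => r s; rewrite br0 /abelian3_br /lincomb.
by rewrite big1 // => i _; rewrite mxE scale0r.
Qed.

Section Dimension3.
Variables (K : fieldType) (V : vectType K) (br : V -> V -> V).
Hypotheses (brA : acaa br) (two_neq0 : 2%:R != 0 :> K) (dimV : \dim {:V} = 3).

Lemma br_br0 x y z : br x (br y z) = 0.
Proof.
set w := br x (br y z); have [//|w_neq0] := eqVneq w 0.
have coords0 a b c : (forall u, br (a *: x + b *: y + c *: z) u = 0) ->
    [/\ a = 0, b = 0 & c = 0].
  move=> v0; have [] := br_comb3_brs brA two_neq0 x y z a b c; rewrite !v0 -/w.
  by move=> /esym/(scaler_eq0_coef w_neq0)-> /esym/(scaler_eq0_coef w_neq0)->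
    /esym/(scaler_eq0_coef w_neq0)->.
have Xbasis : basis_of fullv [tuple x; y; z].
  by apply: basis_of_tuple3 => // a b c v0; apply: coords0 => u; rewrite v0 br0l.
have := coord_basis Xbasis (memvf w); rewrite sum_tuple3 => wE.
have := coords0 (coord [tuple x; y; z] ord0 w) (coord [tuple x; y; z] (inord 1) w)
  (coord [tuple x; y; z] (inord 2) w).
rewrite -wE => /(_ (br_nested_l0 brA two_neq0 x y z)) [a0 b0 c0].
by rewrite wE a0 b0 c0 !scale0r !addr0.
Qed.

Lemma br_brl0 x y u : br (br x y) u = 0.
Proof. by rewrite (brC brA) br_br0 oppr0. Qed.

Lemma heis3_basis p q : br p q != 0 -> basis_of fullv [tuple p; q; br p q].
Proof.
move=> pq_neq0; apply: basis_of_tuple3 => // a b c v0.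
have a0 : a = 0.
  apply: (scaler_eq0_coef pq_neq0); move/(congr1 (br^~ q)): v0.
  rewrite /= !(brDl brA) !(brZl brA) (brxx brA two_neq0) br_brl0 (br0l brA).
  by rewrite !scaler0 !addr0.
move: v0; rewrite a0 scale0r add0r => v0.
have b0 : b = 0.
  apply: (scaler_eq0_coef pq_neq0); apply/eqP; rewrite -oppr_eq0 -scalerN.
  move/(congr1 (br^~ p)): v0; rewrite /= (brDl brA) !(brZl brA) (brC brA q).
  by rewrite br_brl0 (br0l brA) scaler0 addr0 => ->.
by move: v0; rewrite b0 scale0r add0r => /(scaler_eq0_coef pq_neq0).
Qed.

Lemma alg_iso_heis3 p q : br p q != 0 -> alg_iso br (@heis3_br K).
Proof.
move=> /heis3_basis pq_basis; apply: (alg_iso_basis pq_basis) => r s.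
rewrite /heis3_br lincomb_scale_delta /lincomb !sum_tuple3 /= inordK //=.
rewrite !(brDl brA) !(brDr brA) !(brZl brA) !(brZr brA) !br_brl0 !br_br0.
rewrite (brC brA q p) !(brxx brA two_neq0) !scaler0 !addr0 !add0r !scalerA.
by rewrite scalerN -scaleNr -scalerDl.
Qed.

End Dimension3.

Theorem mainTheorem3 (K : fieldType) (charK0 : [pchar K] =i pred0)
  (V : vectType K) (dimV : \dim (fullv : {vspace V}) = 3%N)
  (br : V -> V -> V) (hA : acaa br) :
  alg_iso br (@abelian3_br K) \/ alg_iso br (@heis3_br K).
Proof.
have two_neq0 : 2%:R != 0 :> K by have := charK0 2; rewrite !inE /= => /negbT.
have [[p [q pq_neq0]] | br_eq0] := classic (exists p q, br p q != 0).
  by right; apply: alg_iso_heis3 pq_neq0.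
left; apply: alg_iso_abelian3 => // x y.
by apply/eqP/negPn/negP => xy_neq0; apply: br_eq0; exists x, y.
Qed.
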